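(* Let $p$ be a propositional variable. A substitution $\sigma$ is a unifier of $[1]p$ in $\mathbf{GLP}$ if and only if, for some $k\geq 1$, $\sigma\leq(Q_k(p)\to p)$, where $(Q_k(p)\to p)$ denotes the substitution $p\mapsto(Q_k(p)\to p)$.
   Context: $\mathbf{GLP}$ is the propositional polymodal logic with modalities $[0],[1],\dots$ ($\langle k\rangle:=\neg[k]\neg$) axiomatized by classical tautologies; $[k](\phi\to\psi)\to([k]\phi\to[k]\psi)$; $[k]([k]\phi\to\phi)\to[k]\phi$; $\langle j\rangle\phi\to[k]\langle j\rangle\phi$ for $j<k$; $[j]\phi\to[k]\phi$ for $j\leq k$; rules modus ponens and necessitation. A substitution commutes with all connectives and modalities; $\sigma$ is a unifier of $[1]p$ if $\mathbf{GLP}\vdash[1]\sigma(p)$. $\tau\leq\sigma$ means there is a substitution $\theta$ with $\mathbf{GLP}\vdash\tau(q)\leftrightarrow\theta(\sigma(q))$ for every variable $q$. Define $Q_1(p):=p$ and $Q_{i+1}(p):=p\lor[0]Q_i(p)$. *)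

From Stdlib Require Import Arith.

Inductive form : Type :=
| Var : nat -> form
| Bot : form
| Imp : form -> form -> form
| Box : nat -> form -> form.

Definition Neg (a : form) : form := Imp a Bot.
Definition Top : form := Neg Bot.
Definition Or (a b : form) : form := Imp (Neg a) b.
Definition And (a b : form) : form := Neg (Imp a (Neg b)).
Definition Iff (a b : form) : form := And (Imp a b) (Imp b a).
Definition Dia (k : nat) (a : form) : form := Neg (Box k (Neg a)).

Fixpoint peval (v : form -> bool) (f : form) : bool :=
  match f with
  | Var _ => v f
  | Bot => false
  | Imp a b => implb (peval v a) (peval v b)
  | Box _ _ => v f
  end.

(* A classical tautology: an instance of a propositional tautology,
   i.e. true under every assignment to its atoms. *)
Definition tautology (f : form) : Prop := forall v, peval v f = true.

Inductive Prf : form -> Prop :=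
| ax_taut : forall f, tautology f -> Prf f
| ax_K : forall k a b, Prf (Imp (Box k (Imp a b)) (Imp (Box k a) (Box k b)))
| ax_Loeb : forall k a, Prf (Imp (Box k (Imp (Box k a) a)) (Box k a))
| ax_dia : forall j k a, j < k -> Prf (Imp (Dia j a) (Box k (Dia j a)))
| ax_mono : forall j k a, j <= k -> Prf (Imp (Box j a) (Box k a))
| rule_mp : forall a b, Prf (Imp a b) -> Prf a -> Prf b
| rule_nec : forall k a, Prf a -> Prf (Box k a).

Definition subst := nat -> form.

Fixpoint apply_subst (s : subst) (f : form) : form :=
  match f with
  | Var n => s n
  | Bot => Bot
  | Imp a b => Imp (apply_subst s a) (apply_subst s b)
  | Box k a => Box k (apply_subst s a)
  end.

Definition unifier_box1 (p : nat) (sigma : subst) : Prop :=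
  Prf (Box 1 (sigma p)).

Definition subst_le (tau sigma : subst) : Prop :=
  exists theta : subst, forall q, Prf (Iff (tau q) (apply_subst theta (sigma q))).

(* Q_1(p) = p, Q_{i+1}(p) = p \/ [0] Q_i(p)  (Q 0 is an unused dummy = p) *)
Fixpoint Q (i : nat) (p : nat) : form :=
  match i with
  | 0 => Var p
  | 1 => Var p
  | S i' => Or (Var p) (Box 0 (Q i' p))
  end.

Definition Qsubst (k p : nat) : subst :=
  fun q => if Nat.eqb q p then Imp (Q k p) (Var p) else Var q.

(* If sigma unifies [1]p, i.e. GLP proves [1](sigma p), then it proves
   Q_k(sigma p) for some k >= 1, so sigma p is equivalent to
   Q_k(sigma p) -> sigma p and sigma is an instance of [p := Q_k(p) -> p].
   Conversely [1](Q_k(b) -> b) is a theorem for every b.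

   Q_(n+1)(a) is provable as soon as a follows from n reflection principles
   [0]psi -> psi: either [0]Q_n(a) holds, or no [0]psi does and the
   reflection principles hold vacuously. If a follows from no finite set of
   reflection principles, a syntactic model refutes [1]a: a world is a
   formula g deciding enough formulas [0]chi; [0]b holds at g when g proves
   [0]b, [1]b holds when b follows from reflection principles under a
   hypothesis L implied by g with L -> [1]L provable, and [k]b for k >= 2
   always holds. *)

From Stdlib Require Import Arith Bool Lia List Classical ClassicalEpsilon.
Import ListNotations.

Definition reflection (a : form) : form := Imp (Box 0 a) a.

Fixpoint reflections (l : list form) : form :=
  match l with [] => Top | x :: l => And (reflection x) (reflections l) end.

Lemma peval_reflections_app v l1 l2 :
  peval v (reflections (l1 ++ l2)) = peval v (reflections l1) && peval v (reflections l2).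
Proof.
  induction l1 as [|x l1 IH]; simpl; [reflexivity|].
  rewrite IH. unfold reflection; simpl.
  destruct (v (Box 0 x)), (peval v x), (peval v (reflections l1)),
    (peval v (reflections l2)); reflexivity.
Qed.

Ltac solve_tautology :=
  repeat match goal with x := _ |- _ => subst x end;
  let v := fresh "v" in intro v; cbn [peval Neg Top Or And Iff Dia reflection];
  rewrite ?peval_reflections_app; cbn [peval reflections reflection Neg Top Or And Iff Dia];
  repeat (match goal with
    | |- context [peval v ?x] => destruct (peval v x)
    | |- context [v ?x] => destruct (v x) end; cbn); reflexivity.

Lemma Prf_taut_mp1 A B : tautology (Imp A B) -> Prf A -> Prf B.
Proof. intros t h. exact (rule_mp _ _ (ax_taut _ t) h). Qed.

Lemma Prf_taut_mp2 A B C : tautology (Imp A (Imp B C)) -> Prf A -> Prf B -> Prf C.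
Proof. intros t h1. apply rule_mp. exact (Prf_taut_mp1 _ _ t h1). Qed.

Lemma Prf_taut_mp3 A B C D :
  tautology (Imp A (Imp B (Imp C D))) -> Prf A -> Prf B -> Prf C -> Prf D.
Proof. intros t h1 h2. apply rule_mp. exact (Prf_taut_mp2 _ _ _ t h1 h2). Qed.

Lemma Prf_taut_mp4 A B C D E :
  tautology (Imp A (Imp B (Imp C (Imp D E)))) -> Prf A -> Prf B -> Prf C -> Prf D -> Prf E.
Proof. intros t h1 h2 h3. apply rule_mp. exact (Prf_taut_mp3 _ _ _ _ t h1 h2 h3). Qed.

Tactic Notation "by_taut" := apply ax_taut; solve_tautology.
Tactic Notation "by_taut" constr(h1) :=
  refine (Prf_taut_mp1 _ _ _ h1); solve_tautology.
Tactic Notation "by_taut" constr(h1) constr(h2) :=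
  refine (Prf_taut_mp2 _ _ _ _ h1 h2); solve_tautology.
Tactic Notation "by_taut" constr(h1) constr(h2) constr(h3) :=
  refine (Prf_taut_mp3 _ _ _ _ _ h1 h2 h3); solve_tautology.
Tactic Notation "by_taut" constr(h1) constr(h2) constr(h3) constr(h4) :=
  refine (Prf_taut_mp4 _ _ _ _ _ _ h1 h2 h3 h4); solve_tautology.

Lemma box_mono k A B : Prf (Imp A B) -> Prf (Imp (Box k A) (Box k B)).
Proof. intro h. exact (rule_mp _ _ (ax_K k A B) (rule_nec _ _ h)). Qed.

Lemma box_and k A B : Prf (Imp (Box k A) (Imp (Box k B) (Box k (And A B)))).
Proof.
  assert (hA : Prf (Imp (Box k A) (Box k (Imp B (And A B))))).
  { apply box_mono. by_taut. }
  by_taut hA (ax_K k B (And A B)).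
Qed.

(* Loeb's axiom for [a /\ [k]a] yields transitivity. *)
Lemma box_four k a : Prf (Imp (Box k a) (Box k (Box k a))).
Proof.
  set (c := And a (Box k a)).
  assert (hca : Prf (Imp (Box k c) (Box k a))) by (apply box_mono; by_taut).
  assert (hcc : Prf (Imp (Box k c) (Box k (Box k a)))) by (apply box_mono; by_taut).
  assert (hstep : Prf (Imp (Box k a) (Box k (Imp (Box k c) c)))).
  { apply box_mono. by_taut hca. }
  by_taut hstep (ax_Loeb k c) hcc.
Qed.

Lemma box0_box1_box0 a : Prf (Imp (Box 0 a) (Box 1 (Box 0 a))).
Proof. by_taut (box_four 0 a) (ax_mono 0 1 (Box 0 a) (Nat.le_0_l 1)). Qed.

Lemma not_box0_box1 a : Prf (Imp (Neg (Box 0 a)) (Box 1 (Neg (Box 0 a)))).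
Proof.
  assert (hnn : Prf (Imp (Box 0 (Neg (Neg a))) (Box 0 a))) by (apply box_mono; by_taut).
  assert (hnn' : Prf (Imp (Box 0 a) (Box 0 (Neg (Neg a))))) by (apply box_mono; by_taut).
  assert (hdia : Prf (Imp (Box 1 (Dia 0 (Neg a))) (Box 1 (Neg (Box 0 a))))).
  { apply box_mono. by_taut hnn'. }
  by_taut (ax_dia 0 1 (Neg a) Nat.lt_0_1) hnn hdia.
Qed.

(* Case split on [0]b: either [1]b, or [1]~[0]b; both give [1]([0]b -> c). *)
Lemma box1_box0_imp b c :
  Prf (Imp (Box 1 b) (Box 1 c)) -> Prf (Box 1 (Imp (Box 0 b) c)).
Proof.
  intro hbc.
  assert (hc : Prf (Imp (Box 1 c) (Box 1 (Imp (Box 0 b) c)))) by (apply box_mono; by_taut).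
  assert (hn : Prf (Imp (Box 1 (Neg (Box 0 b))) (Box 1 (Imp (Box 0 b) c)))).
  { apply box_mono. by_taut. }
  assert (hb : Prf (Imp (Box 0 b) (Box 1 (Imp (Box 0 b) c)))).
  { by_taut (ax_mono 0 1 b (Nat.le_0_l 1)) hbc hc. }
  by_taut hb (not_box0_box1 b) hn.
Qed.

Lemma box1_reflection a : Prf (Box 1 (reflection a)).
Proof. apply box1_box0_imp. by_taut. Qed.

Lemma box1_reflections l : Prf (Box 1 (reflections l)).
Proof.
  induction l as [|x l IH]; simpl.
  - apply rule_nec. by_taut.
  - by_taut (box_and 1 (reflection x) (reflections l)) (box1_reflection x) IH.
Qed.

Fixpoint Qform (i : nat) (a : form) : form :=
  match i with
  | 0 | 1 => a
  | S i' => Or a (Box 0 (Qform i' a))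
  end.

Lemma apply_subst_Q s k p : apply_subst s (Q k p) = Qform k (s p).
Proof.
  induction k as [|k IH]; [reflexivity|].
  destruct k as [|k]; [reflexivity|].
  change (Q (S (S k)) p) with (Or (Var p) (Box 0 (Q (S k) p))).
  simpl in IH |- *. rewrite <- IH. reflexivity.
Qed.

Lemma box1_Qform_imp k b : 1 <= k -> Prf (Box 1 (Imp (Qform k b) b)).
Proof.
  induction k as [|k IH]; intro Hk; [lia|].
  destruct k as [|k]; [apply rule_nec; simpl; by_taut|].
  specialize (IH (le_n_S _ _ (Nat.le_0_l k))).
  change (Qform (S (S k)) b) with (Or b (Box 0 (Qform (S k) b))).
  assert (hstep : Prf (Box 1 (Imp (Box 0 (Qform (S k) b)) b))).
  { apply box1_box0_imp. exact (rule_mp _ _ (ax_K 1 _ _) IH). }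
  refine (rule_mp _ _ (box_mono 1 _ _ _) hstep). by_taut.
Qed.

Lemma not_box0_reflections c b l :
  (forall psi, In psi l -> Prf (Imp c (Imp (Box 0 psi) (Box 0 b)))) ->
  Prf (Imp c (Imp (Neg (Box 0 b)) (reflections l))).
Proof.
  induction l as [|psi l IH]; intro H; [by_taut|].
  by_taut (H psi (or_introl eq_refl)) (IH (fun q Hq => H q (or_intror Hq))).
Qed.

Lemma Qform_of_reflections_under n : forall l a c, length l <= n ->
  Prf (Imp c (Box 0 c)) -> Prf (Imp c (Imp (reflections l) a)) ->
  Prf (Imp c (Qform (S n) a)).
Proof.
  induction n as [|n IH]; intros l a c Hl Hc Hla.
  - destruct l; [by_taut Hla|simpl in Hl; lia].
  - change (Qform (S (S n)) a) with (Or a (Box 0 (Qform (S n) a))).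
    assert (Hpsi : forall psi, In psi l ->
      Prf (Imp c (Imp (Box 0 psi) (Box 0 (Qform (S n) a))))).
    { intros psi Hin. destruct (in_split _ _ Hin) as [l1 [l2 ->]].
      rewrite length_app in Hl; simpl in Hl.
      (* Under [0]psi, the stronger context c /\ psi /\ [0]psi is still
         [0]-stable and discharges the reflection principle for psi. *)
      set (c' := And c (And psi (Box 0 psi))).
      assert (hc'box : Prf (Imp c (Imp (Box 0 psi) (Box 0 c')))).
      { by_taut Hc (box_four 0 psi) (box_and 0 psi (Box 0 psi))
          (box_and 0 c (And psi (Box 0 psi))). }
      assert (hc' : Prf (Imp c' (Box 0 c'))) by by_taut hc'box.
      assert (hc'a : Prf (Imp c' (Imp (reflections (l1 ++ l2)) a))) by by_taut Hla.
      assert (hQ := IH (l1 ++ l2) a c' ltac:(rewrite length_app; lia) hc' hc'a).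
      by_taut hc'box (box_mono 0 _ _ hQ). }
    by_taut (not_box0_reflections c _ l Hpsi) Hla.
Qed.

Lemma Qform_of_reflections l a :
  Prf (Imp (reflections l) a) -> Prf (Qform (S (length l)) a).
Proof.
  intro Hla.
  assert (hQ : Prf (Imp Top (Qform (S (length l)) a))).
  { apply (Qform_of_reflections_under _ l); [lia| |by_taut Hla].
    by_taut (rule_nec 0 Top ltac:(by_taut)). }
  by_taut hQ.
Qed.

Definition refl_consistent (a D : form) : Prop :=
  forall l, ~ Prf (Imp D (Imp (reflections l) a)).

Definition decides (g chi : form) : Prop :=
  Prf (Imp g (Box 0 chi)) \/ Prf (Imp g (Neg (Box 0 chi))).

Lemma refl_consistent_split a D chi : refl_consistent a D ->
  refl_consistent a (And D (Box 0 chi)) \/ refl_consistent a (And D (Neg (Box 0 chi))).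
Proof.
  intro HD. destruct (classic (refl_consistent a (And D (Box 0 chi)))) as [h|h];
    [left; exact h|right].
  intros l2 H2. apply not_all_not_ex in h. destruct h as [l1 H1].
  apply (HD (l1 ++ l2)). by_taut H1 H2.
Qed.

Lemma refl_consistent_decide a F : forall D, refl_consistent a D ->
  exists D', refl_consistent a D' /\ Prf (Imp D' D) /\
    forall chi, In chi F -> decides D' chi.
Proof.
  induction F as [|chi F IH]; intros D HD.
  - exists D. split; [exact HD|split; [by_taut|intros _ []]].
  - destruct (refl_consistent_split a D chi HD) as [HD1|HD1];
      destruct (IH _ HD1) as [D' [HD' [hD'D Hdec]]];
      exists D'; (split; [exact HD'|split; [by_taut hD'D|]]);
      (intros c [<-|Hin]; [|exact (Hdec c Hin)]); [left|right]; by_taut hD'D.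
Qed.

Definition box1_holds (g b : form) : Prop := exists L l,
  Prf (Imp g L) /\ Prf (Imp L (Box 1 L)) /\ Prf (Imp L (Imp (reflections l) b)).

Fixpoint holds (g : form) (f : form) : Prop :=
  match f with
  | Var _ | Bot => False
  | Imp a b => holds g a -> holds g b
  | Box 0 a => Prf (Imp g (Box 0 a))
  | Box 1 a => box1_holds g a
  | Box _ _ => True
  end.

Lemma holds_tautology g f : tautology f -> holds g f.
Proof.
  set (v := fun h => if excluded_middle_informative (holds g h) then true else false).
  assert (Hv : forall h, v h = true <-> holds g h).
  { intro h. unfold v. destruct (excluded_middle_informative (holds g h));
      split; congruence || tauto. }
  assert (Hpeval : forall h, peval v h = true <-> holds g h).
  { induction h as [n| |a IHa b IHb|k a _]; simpl; try apply Hv.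
    - split; [discriminate|tauto].
    - rewrite <- IHa, <- IHb. destruct (peval v a), (peval v b); simpl; intuition congruence. }
  intro Hf. apply Hpeval, Hf.
Qed.

Lemma holds_K g k a b : holds g (Imp (Box k (Imp a b)) (Imp (Box k a) (Box k b))).
Proof.
  destruct k as [|[|k]]; simpl; [|intros [L1 [l1 [h1 [h2 h3]]]] [L2 [l2 [h4 [h5 h6]]]]|tauto].
  - intros hab ha. by_taut hab ha (ax_K 0 a b).
  - exists (And L1 L2), (l1 ++ l2). split; [by_taut h1 h4|split].
    + by_taut h2 h5 (box_and 1 L1 L2).
    + by_taut h3 h6.
Qed.

(* For [1], Loeb's axiom is applied under L, which proves [1](L /\ reflections l). *)
Lemma holds_Loeb g k a : holds g (Imp (Box k (Imp (Box k a) a)) (Box k a)).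
Proof.
  destruct k as [|[|k]]; simpl; [|intros [L [l [hgL [hL hLa]]]]|tauto].
  - intro h. by_taut h (ax_Loeb 0 a).
  - exists L, l. split; [exact hgL|split; [exact hL|]].
    assert (hbox : Prf (Imp L (Box 1 (And L (reflections l))))).
    { by_taut (box1_reflections l) hL (box_and 1 L (reflections l)). }
    assert (hLa' : Prf (Imp (And L (reflections l)) (Imp (Box 1 a) a))) by by_taut hLa.
    by_taut hbox (box_mono 1 _ _ hLa') (ax_Loeb 1 a) hLa.
Qed.

Lemma holds_dia g j k a : j < k -> decides g (Neg a) ->
  holds g (Imp (Dia j a) (Box k (Dia j a))).
Proof.
  intros Hjk Hdec. destruct k as [|[|k]]; [lia| |simpl; tauto].
  assert (j = 0) as -> by lia. simpl. intro Hn.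
  destruct Hdec as [h|h]; [contradiction|].
  exists (Dia 0 a), []. split; [exact h|split; [exact (ax_dia 0 1 a Hjk)|by_taut]].
Qed.

Lemma holds_mono g j k a : j <= k -> holds g (Imp (Box j a) (Box k a)).
Proof.
  intro Hjk. destruct k as [|[|k]]; simpl.
  - assert (j = 0) as -> by lia. tauto.
  - destruct j as [|[|j]]; [simpl|tauto|lia]. intro h.
    exists (Box 0 a), [a]. split; [exact h|split; [apply box0_box1_box0|by_taut]].
  - tauto.
Qed.

Lemma holds_nec g k a : Prf a -> holds g (Box k a).
Proof.
  intro Ha. destruct k as [|[|k]]; simpl; [by_taut (rule_nec 0 a Ha)| |exact I].
  exists Top, []. split; [by_taut|split; [by_taut (rule_nec 1 Top ltac:(by_taut))|by_taut Ha]].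
Qed.

Lemma Prf_holds f : Prf f -> exists F, forall g,
  (forall chi, In chi F -> decides g chi) -> holds g f.
Proof.
  induction 1 as [f Ht|k a b|k a|j k a Hjk|j k a Hjk|a b _ [F1 IH1] _ [F2 IH2]|k a Ha _].
  - exists []. intros g _. exact (holds_tautology g f Ht).
  - exists []. intros g _. apply holds_K.
  - exists []. intros g _. apply holds_Loeb.
  - exists [Neg a]. intros g Hdec. exact (holds_dia g j k a Hjk (Hdec _ (or_introl eq_refl))).
  - exists []. intros g _. exact (holds_mono g j k a Hjk).
  - exists (F1 ++ F2). intros g Hdec.
    apply (IH1 g); [|apply (IH2 g)]; intros c Hc; apply Hdec, in_or_app; tauto.
  - exists []. intros g _. exact (holds_nec g k a Ha).
Qed.

Lemma Qform_of_box1 a : Prf (Box 1 a) -> exists k, 1 <= k /\ Prf (Qform k a).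
Proof.
  intro H. apply NNPP. intro Hno.
  assert (Hcons : refl_consistent a Top).
  { intros l Hl. apply Hno. exists (S (length l)). split; [lia|].
    apply Qform_of_reflections. by_taut Hl. }
  destruct (Prf_holds _ H) as [F HF].
  destruct (refl_consistent_decide a F Top Hcons) as [D [HD [_ Hdec]]].
  assert (Hbox : holds (And (Neg a) D) (Box 1 a)).
  { apply HF. intros chi Hin. destruct (Hdec chi Hin) as [h|h]; [left|right]; by_taut h. }
  destruct Hbox as [L [l [hL [_ hLa]]]].
  apply (HD l). by_taut hL hLa.
Qed.

Lemma apply_subst_Qsubst theta k p :
  apply_subst theta (Qsubst k p p) = Imp (Qform k (theta p)) (theta p).
Proof. unfold Qsubst. rewrite Nat.eqb_refl. simpl. rewrite apply_subst_Q. reflexivity. Qed.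

Theorem mainTheorem17 (p : nat) (sigma : subst) :
  unifier_box1 p sigma <-> exists k : nat, 1 <= k /\ subst_le sigma (Qsubst k p).
Proof.
  split.
  - intro H. destruct (Qform_of_box1 _ H) as [k [Hk HQ]].
    exists k. split; [exact Hk|]. exists sigma. intro q.
    destruct (Nat.eq_dec q p) as [->|Hqp].
    + rewrite apply_subst_Qsubst. by_taut HQ.
    + unfold Qsubst. apply Nat.eqb_neq in Hqp. rewrite Hqp. simpl. by_taut.
  - intros [k [Hk [theta Htheta]]]. specialize (Htheta p).
    rewrite apply_subst_Qsubst in Htheta.
    assert (Himp : Prf (Imp (Imp (Qform k (theta p)) (theta p)) (sigma p))) by by_taut Htheta.
    exact (rule_mp _ _ (box_mono 1 _ _ Himp) (box1_Qform_imp k (theta p) Hk)).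
Qed.
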